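(* For every real $r>1$, the number $C_r$ of connected components of $\overline{\sigma_{-r}(\mathbb{N})}$ satisfies $C_r\ge 2^{\pi(r-1)}$, where $\pi(x)$ denotes the number of primes at most $x$.
   Context: For real $r>1$, $\sigma_{-r}(n)=\sum_{d\mid n}d^{-r}$ for $n\in\mathbb{N}$, and $\overline{\sigma_{-r}(\mathbb{N})}$ is the closure in $\mathbb{R}$ of its image. $C_r$ is the number of connected components of this closure. *)

From HB Require Import structures.
From mathcomp Require Import all_boot all_order all_algebra.
From mathcomp Require Import all_classical all_reals all_analysis.
Set Implicit Arguments. Unset Strict Implicit. Unset Printing Implicit Defensive.
Import Order.TTheory GRing.Theory Num.Theory.
Import numFieldNormedType.Exports.
Local Open Scope classical_set_scope.
Local Open Scope ring_scope.

Definition sigma_neg {R : realType} (r : R) (n : nat) : R :=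
  \sum_(d <- divisors n) (d%:R) `^ (- r).

Definition sigma_image {R : realType} (r : R) : set R :=
  [set sigma_neg r n | n in [set n : nat | (0 < n)%N]].

Definition components {T : topologicalType} (A : set T) : set (set T) :=
  connected_component A @` A.

Definition primepi {R : realType} (x : R) : nat :=
  #|[set p : 'I_(Num.truncn x).+1 | prime p && ((p : nat)%:R <= x)]|.

From HB Require Import structures.
From mathcomp Require Import all_boot all_order all_algebra.
From mathcomp Require Import all_classical all_reals all_analysis.
From mathcomp Require Import lra.
Set Implicit Arguments. Unset Strict Implicit. Unset Printing Implicit Defensive.
Import Order.TTheory GRing.Theory Num.Theory.
Import numFieldNormedType.Exports.
Local Open Scope classical_set_scope.
Local Open Scope ring_scope.

(* Let s = r - 1. Comparing with the integral of t^(-r), the tail sum over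
   d > e of d^(-r) is smaller than e^(-r) when 1 <= e <= s, by a margin D
   uniform in e. So if a and b have the same divisors below m <= s and m
   divides a but not b, then with t the sum of d^(-r) over the divisors
   d <= m of a, sigma_{-r}(a) >= t and sigma_{-r}(b) <= t - D; the same
   dichotomy holds for every n, so the closure of the image misses (t - D, t).
   Products of distinct sets of primes <= s first differ in divisibility at
   some m <= s, hence lie in 2^pi(s) distinct components. *)

Lemma powRN_sub1_gt (R : realType) (s x : R) : 0 < s -> 1 < x ->
  s * x `^ (- (s + 1)) < (x - 1) `^ (- s) - x `^ (- s).
Proof.
move=> s_gt0 x_gt1; have x_gt0 : 0 < x by apply: lt_trans x_gt1.
set q := (x - 1) / x.
have q_gt0 : 0 < q by rewrite divr_gt0 // subr_gt0.
have qE : q = 1 + - x^-1 by rewrite /q mulrBl divff ?gt_eqF // mul1r.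
have ln_q : ln q <= - x^-1.
  by rewrite qE; apply: le_ln1Dx; rewrite ltrNl opprK invf_lt1.
have ln_q_lt0 : ln q < 0.
  by apply: ln_lt0; rewrite q_gt0 qE /= gtrDl oppr_lt0 invr_gt0.
(* [q ^ (- s) = exp (- s ln q) > 1 - s ln q >= 1 + s / x] *)
have q_pow : 1 + s / x < q `^ (- s).
  rewrite /powR gt_eqF //; apply: le_lt_trans (expR_gt1Dx _); last first.
    by rewrite mulf_eq0 negb_or oppr_eq0 gt_eqF //= lt_eqF.
  by rewrite lerD2l mulNr -mulrN ler_pM2l // lerNr.
have -> : x - 1 = x * q by rewrite /q mulrC divfK // gt_eqF.
rewrite powRM ?ltW // -[X in _ < _ - X]mulr1 -mulrBr opprD.
rewrite powRD; last by apply/implyP => _; rewrite gt_eqF.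
rewrite powR_inv1 ?ltW // mulrCA ltr_pM2l ?powR_gt0 //.
by move: q_pow; rewrite -(ltrD2l (-1)) addKr addrC mulrC.
Qed.

Lemma connected_component_closure_gap (R : realType) (S : set R) (x z t D : R) :
  0 < D -> S x -> S z -> x <= t - D -> t <= z ->
  (forall u, S u -> t <= u \/ u <= t - D) ->
  connected_component (closure S) x <> connected_component (closure S) z.
Proof.
move=> D_gt0 Sx Sz x_le z_ge gapS eq_xz.
set K := connected_component (closure S) z.
have Kz : K z by apply/connected_component_refl/subset_closure.
have Kx : K x by rewrite /K -eq_xz; apply/connected_component_refl/subset_closure.
have K_itv : is_interval K by apply/connected_intervalP/component_connected.
have Ky : K (t - D / 2) by apply: (K_itv x z) => //; apply/andP; split; lra.
have D2_gt0 : 0 < D / 2 by rewrite divr_gt0.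
have [u [Su]] := connected_component_sub Ky _ (nbhsx_ballx _ _ D2_gt0).
rewrite -ball_normE /ball_ /= => /ltr_normlP[].
by case: (gapS u Su); lra.
Qed.

Lemma first_dvdn_diff (a b p : nat) : (0 < a)%N -> (0 < b)%N ->
  (p %| a)%N != (p %| b)%N ->
  exists m, [/\ (0 < m <= p)%N, (m %| a)%N != (m %| b)%N &
                forall d, (d < m)%N -> (d %| a)%N = (d %| b)%N].
Proof.
move=> a_gt0 b_gt0 p_diff.
have [m m_diff m_min] := ex_minnP (ex_intro (fun m => (m %| a)%N != (m %| b)%N) p p_diff).
exists m; split=> //.
- rewrite m_min // andbT lt0n; apply: contraNneq m_diff => ->.
  by rewrite !dvd0n !gtn_eqF.
- by move=> d d_lt; apply: contraTeq d_lt => /m_min; rewrite -leqNgt.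
Qed.

Section SigmaGaps.
Variables (R : realType) (r : R).
Hypothesis r_gt1 : 1 < r.
Let s := r - 1.
Let s_gt0 : 0 < s. Proof. by rewrite subr_gt0. Qed.

Definition sigma_term (d : nat) : R := d%:R `^ (- r).
(* [- tail_majorant] is an antiderivative of [t ^ (- r)]. *)
Definition tail_majorant (d : nat) : R := d%:R `^ (- s) / s.
Definition tail_bound (e : nat) : R := sigma_term e.+1 + tail_majorant e.+1.
Definition partial_sigma (n e : nat) : R :=
  \sum_(0 <= d < e.+1 | (d %| n)%N) sigma_term d.

Lemma sigma_term_ge0 d : 0 <= sigma_term d. Proof. exact: powR_ge0. Qed.

Lemma tail_majorant_ge0 d : 0 <= tail_majorant d.
Proof. by rewrite divr_ge0 ?powR_ge0 ?ltW. Qed.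

Lemma tail_bound_ge0 e : 0 <= tail_bound e.
Proof. by rewrite addr_ge0 ?sigma_term_ge0 ?tail_majorant_ge0. Qed.

Lemma sigma_term_lt_majorant_diff d :
  sigma_term d.+2 < tail_majorant d.+1 - tail_majorant d.+2.
Proof.
have d_gt1 : 1 < d.+2%:R :> R by rewrite ltr1n.
have := powRN_sub1_gt s_gt0 d_gt1.
rewrite /s subrK -natr1 addrK -mulrBl ltr_pdivlMr // mulrC.
by rewrite /sigma_term natr1.
Qed.

Lemma sum_sigma_term_telescope e j :
  \sum_(e.+2 <= d < e.+2 + j) sigma_term d <=
    tail_majorant e.+1 - tail_majorant (e.+1 + j).
Proof.
elim: j => [|j IHj]; first by rewrite addn0 big_geq // addn0 subrr.
rewrite addnS big_nat_recr ?leq_addr //=.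
apply: le_trans (lerD IHj (ltW (sigma_term_lt_majorant_diff (e + j)))) _.
by rewrite !addSn addnS addrA subrK.
Qed.

Lemma sum_sigma_term_tail e N : \sum_(e.+1 <= d < N) sigma_term d <= tail_bound e.
Proof.
have [N_le|N_gt] := leqP N e.+1; first by rewrite big_geq ?tail_bound_ge0.
rewrite big_ltn // lerD2l -(subnKC N_gt).
apply: le_trans (sum_sigma_term_telescope _ _) _.
by rewrite gerBl tail_majorant_ge0.
Qed.

Lemma tail_bound_lt_sigma_term e : e.+1%:R <= s -> tail_bound e.+1 < sigma_term e.+1.
Proof.
move=> e_le_s; have e_gt0 : 0 < e.+1%:R :> R by rewrite ltr0n.
apply: lt_le_trans (_ : tail_majorant e.+1 <= _).
  by rewrite -(subrK (tail_majorant e.+2) (tail_majorant e.+1)) ltrD2r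
     sigma_term_lt_majorant_diff.
rewrite /sigma_term /tail_majorant.
have -> : - r = - s + - 1 by rewrite /s opprB addrAC subrr add0r.
rewrite powRD; last by apply/implyP => _; rewrite gt_eqF.
by rewrite powR_inv1 ?ler0n // ler_pM2l ?powR_gt0 // lef_pV2 ?posrE.
Qed.

Lemma exists_uniform_tail_gap M : M%:R <= s ->
  exists2 D, 0 < D & forall e, (0 < e <= M)%N -> D <= sigma_term e - tail_bound e.
Proof.
elim: M => [_|M IHM M_le_s]; first by exists 1 => // e; case: e.
have [|D D_gt0 D_le] := IHM; first by apply: le_trans M_le_s; rewrite ler_nat.
exists (Num.min D (sigma_term M.+1 - tail_bound M.+1)).
  by rewrite lt_min D_gt0 subr_gt0 tail_bound_lt_sigma_term.
move=> e /andP[e_gt0]; rewrite leq_eqVlt => /orP[/eqP->|e_le_M].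
  by rewrite ge_min lexx orbT.
by rewrite ge_min D_le ?e_gt0.
Qed.

Lemma sigma_negE n N : (0 < n < N)%N ->
  sigma_neg r n = \sum_(0 <= d < N | (d %| n)%N) sigma_term d.
Proof.
case/andP=> n_gt0 n_lt_N; rewrite -big_filter /sigma_neg.
apply: perm_big; apply: uniq_perm; rewrite ?filter_uniq ?divisors_uniq ?iota_uniq //.
move=> d; rewrite mem_filter -dvdn_divisors // mem_iota add0n subn0.
by case: (boolP (d %| n)%N) => // /(dvdn_leq n_gt0)/leq_ltn_trans->.
Qed.

Lemma sigma_neg_split n e : (0 < n)%N ->
  sigma_neg r n = partial_sigma n e + \sum_(e.+1 <= d < (n + e).+1 | (d %| n)%N) sigma_term d.
Proof.
move=> n_gt0; rewrite (@sigma_negE n (n + e).+1) ?n_gt0 ?ltnS ?leq_addr //.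
by rewrite -big_cat_nat // ltnS leq_addl.
Qed.

Lemma partial_sigma_le n e : (0 < n)%N -> partial_sigma n e <= sigma_neg r n.
Proof.
move=> n_gt0; rewrite (sigma_neg_split e n_gt0) lerDl.
by rewrite sumr_ge0 // => d _; apply: sigma_term_ge0.
Qed.

Lemma sigma_neg_le_partial n e : (0 < n)%N ->
  sigma_neg r n <= partial_sigma n e + tail_bound e.
Proof.
move=> n_gt0; rewrite (sigma_neg_split e n_gt0) lerD2l.
apply: le_trans (sum_sigma_term_tail e (n + e).+1).
rewrite big_mkcond /=; apply: ler_sum => d _.
by case: ifP => _; rewrite ?sigma_term_ge0.
Qed.

Lemma partial_sigmaS n e :
  partial_sigma n e.+1 = partial_sigma n e + (if (e.+1 %| n)%N then sigma_term e.+1 else 0).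
Proof. by rewrite /partial_sigma big_mkcond big_nat_recr //= -big_mkcond. Qed.

Lemma le_partial_sigma n : {homo partial_sigma n : e e' / (e <= e')%N >-> e <= e'}.
Proof.
move=> e e' e_le; rewrite /partial_sigma (@big_cat_nat _ _ _ e.+1 _ e'.+1) //=.
by rewrite lerDl sumr_ge0 // => d _; apply: sigma_term_ge0.
Qed.

Lemma eq_partial_sigma n m e : (forall d, (d <= e)%N -> (d %| n)%N = (d %| m)%N) ->
  partial_sigma n e = partial_sigma m e.
Proof.
move=> eq_dvd; rewrite /partial_sigma big_nat_cond [RHS]big_nat_cond.
by apply: eq_bigl => d; apply: andb_id2l => /andP[_ /eq_dvd].
Qed.

Lemma sigma_neg_separation n a e : (0 < n)%N ->
  (forall d, (d <= e)%N -> (d %| n)%N = (d %| a)%N) ->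
  (e.+1 %| a)%N -> ~~ (e.+1 %| n)%N ->
  sigma_neg r n + (sigma_term e.+1 - tail_bound e.+1) <= partial_sigma a e.+1.
Proof.
move=> n_gt0 eq_dvd ea /negbTE en.
have := sigma_neg_le_partial e.+1 n_gt0.
rewrite !partial_sigmaS ea en addr0 (eq_partial_sigma eq_dvd); lra.
Qed.

Lemma sigma_neg_gap a m : (0 < a)%N -> m%:R <= s -> (m %| a)%N ->
  exists2 D, 0 < D & forall n, (0 < n)%N ->
    partial_sigma a m <= sigma_neg r n \/ sigma_neg r n <= partial_sigma a m - D.
Proof.
move=> a_gt0 m_le_s ma.
have [D D_gt0 D_le] := exists_uniform_tail_gap m_le_s.
exists D => // n n_gt0.
have [eq_dvd|] := boolP [forall d : 'I_m.+1, (d %| n)%N == (d %| a)%N].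
  left; rewrite -(@eq_partial_sigma n) ?partial_sigma_le // => d d_le.
  by have /eqP := forallP eq_dvd (Ordinal (d_le : (d < m.+1)%N)).
rewrite negb_forall => /existsP[d0 d0_diff].
have [[|e] [/andP[// _ e_le_d0] e_diff eq_dvd]] := first_dvdn_diff n_gt0 a_gt0 d0_diff.
have e_le_m : (e < m)%N := leq_ltn_trans e_le_d0 (ltn_ord d0).
have gap_e := D_le e.+1 e_le_m.
have eq_dvd' d : (d <= e)%N -> (d %| n)%N = (d %| a)%N by move=> ?; apply: eq_dvd.
case ea: (e.+1 %| a)%N; rewrite ea ?eqb_id ?eqbF_neg ?negbK in e_diff.
- right; have := sigma_neg_separation n_gt0 eq_dvd' ea e_diff.
  have := le_partial_sigma a e_le_m; lra.
- left; have := sigma_neg_separation a_gt0 (fun d d_le => esym (eq_dvd' d d_le)) e_diff (negbT ea).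
  have := partial_sigma_le e.+1 n_gt0; have := partial_sigma_le m a_gt0; lra.
Qed.

Lemma sigma_neg_component_neq a b m : (0 < a)%N -> (0 < b)%N -> m%:R <= s ->
  (m %| a)%N != (m %| b)%N -> (forall d, (d < m)%N -> (d %| a)%N = (d %| b)%N) ->
  connected_component (closure (sigma_image r)) (sigma_neg r a) <>
  connected_component (closure (sigma_image r)) (sigma_neg r b).
Proof.
wlog ma : a b / (m %| a)%N => [wlog_ma a_gt0 b_gt0 m_le_s m_diff eq_dvd|].
  case ma: (m %| a)%N; first exact: wlog_ma.
  have mb : (m %| b)%N by move: m_diff; rewrite ma; case: (m %| b)%N.
  apply/nesym/wlog_ma => //; first by rewrite eq_sym.
  by move=> d /eq_dvd.
move=> a_gt0 b_gt0 m_le_s m_diff eq_dvd.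
have mb : ~~ (m %| b)%N by move: m_diff; rewrite ma; case: (m %| b)%N.
have [D D_gt0 gap] := sigma_neg_gap a_gt0 m_le_s ma.
case: m m_le_s ma mb eq_dvd gap {m_diff} => [|e] e_le_s ea eb eq_dvd gap.
  by rewrite dvd0n gtn_eqF in ea.
have b_lt : sigma_neg r b < partial_sigma a e.+1.
  have := sigma_neg_separation b_gt0 (fun d d_le => esym (eq_dvd d d_le)) ea eb.
  have := tail_bound_lt_sigma_term e_le_s; lra.
apply/nesym/(connected_component_closure_gap D_gt0 (t := partial_sigma a e.+1)).
- by exists b.
- by exists a.
- by case: (gap b b_gt0) => //; rewrite leNgt b_lt.
- exact: partial_sigma_le.
- by move=> _ [n n_gt0 <-]; apply: gap.
Qed.

End SigmaGaps.

Lemma prime_dvd_prod_set k (T : {set 'I_k}) (p : 'I_k) :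
  {in T, forall q : 'I_k, prime q} -> prime p ->
  (p %| \prod_(q in T) q)%N = (p \in T).
Proof.
move=> T_prime p_prime; rewrite Euclid_dvd_prod // big_orE.
apply/existsP/idP => [[q /andP[qT]]|pT]; last by exists p; rewrite pT dvdnn.
by rewrite dvdn_prime2 // ?T_prime // => /eqP/val_inj->.
Qed.

Lemma sigma_neg_prod_component_neq (R : realType) (r : R) k (T1 T2 : {set 'I_k}) :
  1 < r -> {in T1 :|: T2, forall p : 'I_k, prime p && (p%:R <= r - 1)} -> T1 != T2 ->
  connected_component (closure (sigma_image r)) (sigma_neg r (\prod_(p in T1) p)%N) <>
  connected_component (closure (sigma_image r)) (sigma_neg r (\prod_(p in T2) p)%N).
Proof.
move=> r_gt1 T_primes T12.
have T_prime (T : {set 'I_k}) : T \subset T1 :|: T2 -> {in T, forall p : 'I_k, prime p}.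
  by move=> /fintype.subsetP sT p /sT /T_primes /andP[].
have T1_prime := T_prime _ (finset.subsetUl T1 T2).
have T2_prime := T_prime _ (finset.subsetUr T1 T2).
have prod_gt0 (T : {set 'I_k}) : {in T, forall p : 'I_k, prime p} -> (0 < \prod_(p in T) p)%N.
  by move=> T_pr; apply: prodn_cond_gt0 => p /T_pr /prime_gt0.
have [p p_diff] : exists p, (p \in T1) != (p \in T2).
  apply/existsP; apply: contraNT T12 => /existsPn same.
  by apply/eqP/setP => p; apply/eqP/negbNE/same.
have /andP[p_prime p_le] : prime p && (p%:R <= r - 1).
  by apply: T_primes; rewrite inE; move: p_diff; case: (p \in T1); case: (p \in T2).
have dvd_diff : (p %| \prod_(q in T1) q)%N != (p %| \prod_(q in T2) q)%N.
  by rewrite !prime_dvd_prod_set.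
have [m [/andP[_ m_le_p] m_diff eq_dvd]] :=
  first_dvdn_diff (prod_gt0 _ T1_prime) (prod_gt0 _ T2_prime) dvd_diff.
apply: sigma_neg_component_neq m_diff eq_dvd; rewrite ?prod_gt0 //.
by apply: le_trans p_le; rewrite ler_nat.
Qed.

Local Open Scope card_scope.

Lemma card_II_le_inj (T : finType) (U : Type) (P : {set T}) (B : set U) (f : T -> U) :
  {in P &, injective f} -> (forall x, x \in P -> B (f x)) -> `I_#|P| #<= B.
Proof.
move=> f_inj fPB; rewrite (card_le_eql card_II).
have [g] : $|{injfun [set: 'I_#|P|] >-> B}|.
  apply/injfunPex; exists (f \o enum_val) => [i _|i j _ _ /f_inj eq_ij].
    exact/fPB/enum_valP.
  by apply/enum_val_inj/eq_ij; apply: enum_valP.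
exact: inj_card_le.
Qed.

Theorem mainTheorem3 (R : realType) (r : R) (hr : 1 < r) :
  `I_ (2 ^ primepi (r - 1))%N #<= components (closure (sigma_image r)).
Proof.
set A := [set p : 'I_(Num.truncn (r - 1)).+1 | prime p && (p%:R <= r - 1)]%SET.
have -> : primepi (r - 1) = #|A|.
  by apply: eq_card => p; rewrite inE; apply/idP/idP; rewrite in_setE.
rewrite -(card_powerset A).
pose f (T : {set 'I_(Num.truncn (r - 1)).+1}) :=
  connected_component (closure (sigma_image r)) (sigma_neg r (\prod_(p in T) p)%N).
apply: (card_II_le_inj (P := powerset A) (f := f)).
- move=> T1 T2; rewrite !inE => /fintype.subsetP T1A /fintype.subsetP T2A eq_f.
  have [//|T12] := eqVneq T1 T2.
  case: (sigma_neg_prod_component_neq hr _ T12 eq_f) => p.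
  by rewrite inE => /orP[/T1A|/T2A]; rewrite inE.
- move=> T; rewrite inE => /fintype.subsetP TA.
  exists (sigma_neg r (\prod_(p in T) p)%N) => //.
  apply: subset_closure; exists (\prod_(p in T) p)%N => //.
  by apply: prodn_cond_gt0 => p /TA; rewrite inE => /andP[/prime_gt0].
Qed.
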